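(* Let $d\ge1$ and let $x_1,\dots,x_d,y_1,\dots,y_{d+1}$ be real numbers such that the $(d+1)\times(d+1)$ matrix whose $k$-th column $\mathbf{v}_k$ ($1\le k\le d$) has entry $x_k$ in row $k$, entry $y_k$ in row $d+1$ and zeros elsewhere, and whose last column is $\mathbf{v}_{d+1}=(0,\dots,0,y_{d+1})^T$, is nonsingular. Put $K_0=1$ and $K_j=1+\sum_{i=1}^j(y_i/x_i)^2$ for $1\le j\le d$. Let $\mathbf{v}_1^\star,\dots,\mathbf{v}_{d+1}^\star$ be the Gram–Schmidt orthogonalization of $(\mathbf{v}_1,\dots,\mathbf{v}_{d+1})$. Then for $1\le k\le d$ and $1\le i\le d+1$, $$(\mathbf{v}_k^\star)_i=\begin{cases}-\dfrac{y_k}{K_{k-1}}\cdot\dfrac{y_i}{x_i} & i<k,\\ x_k & i=k,\\ 0 & k<i<d+1,\\ \dfrac{y_k}{K_{k-1}} & i=d+1,\end{cases}$$ and $(\mathbf{v}_{d+1}^\star)_i=-\dfrac{y_{d+1}}{K_d}\cdot\dfrac{y_i}{x_i}$ for $i\le d$, $(\mathbf{v}_{d+1}^\star)_{d+1}=\dfrac{y_{d+1}}{K_d}$. Moreover $$\|\mathbf{v}_k^\star\|_2^2=x_k^2\frac{K_k}{K_{k-1}}\ (1\le k\le d),\qquad \|\mathbf{v}_{d+1}^\star\|_2^2=\frac{y_{d+1}^2}{K_d},$$ and the Gram–Schmidt coefficients are $$\mu_{k,j}=\frac{\mathbf{v}_k\cdot\mathbf{v}_j^\star}{\mathbf{v}_j^\star\cdot\mathbf{v}_j^\star}=\frac{y_ky_j}{x_j^2K_j},\qquad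 1\le j<k\le d+1.$$
   Context: $(\mathbf{v})_i$ denotes the $i$-th coordinate, $\|\cdot\|_2$ the Euclidean norm. Gram–Schmidt orthogonalization: $\mathbf{v}_k^\star=\mathbf{v}_k-\sum_{j<k}\mu_{k,j}\mathbf{v}_j^\star$ with $\mu_{k,j}=\frac{\mathbf{v}_k\cdot\mathbf{v}_j^\star}{\mathbf{v}_j^\star\cdot\mathbf{v}_j^\star}$. *)

From mathcomp Require Import all_boot all_order all_algebra.
Set Implicit Arguments. Unset Strict Implicit. Unset Printing Implicit Defensive.
Import Order.TTheory GRing.Theory Num.Theory.
Local Open Scope ring_scope.

Definition dot (R : pzRingType) (n : nat) (u w : 'cV[R]_n) : R :=
  \sum_(i < n) u i 0 * w i 0.

(* Gram-Schmidt orthogonalization of a (0-indexed) family v 0, v 1, ...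
   gs_seq v k = [:: v*_0; ...; v*_(k-1)] with
   v*_k = v_k - \sum_(j<k) mu_(k,j) v*_j,  mu_(k,j) = (v_k . v*_j)/(v*_j . v*_j). *)
Fixpoint gs_seq (R : fieldType) (n : nat) (v : nat -> 'cV[R]_n) (k : nat)
  : seq 'cV[R]_n :=
  match k with
  | 0 => [::]
  | k'.+1 =>
      let s := gs_seq v k' in
      rcons s (v k' - \sum_(j < k')
                 ((dot (v k') (nth 0 s j) / dot (nth 0 s j) (nth 0 s j))
                    *: nth 0 s j))
  end.

Definition gs (R : fieldType) (n : nat) (v : nat -> 'cV[R]_n) (k : nat) : 'cV[R]_n :=
  nth 0 (gs_seq v k.+1) k.

Definition gs_mu (R : fieldType) (n : nat) (v : nat -> 'cV[R]_n) (k j : nat) : R :=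
  dot (v k) (gs v j) / dot (gs v j) (gs v j).

(* The (d+1)x(d+1) matrix of the statement (0-indexed: column k < d has x k in
   row k and y k in row d; column d has y d in row d). *)
Definition Bmat (R : pzRingType) (d : nat) (x y : nat -> R) : 'M[R]_d.+1 :=
  \matrix_(i < d.+1, k < d.+1)
    if (k < d)%N then
      (if i == k then x k else if i == d :> nat then y k else 0)
    else (if i == d :> nat then y d else 0).

Definition Bcol (R : pzRingType) (d : nat) (x y : nat -> R) (k : nat) : 'cV[R]_d.+1 :=
  col (inord k) (Bmat d x y).

(* K j = 1 + \sum_(i<j) (y_i/x_i)^2 (0-indexed, so this is the paper's K_j;
   K 0 = 1). *)
Definition Kc (R : fieldType) (x y : nat -> R) (j : nat) : R :=
  1 + \sum_(i < j) (y i / x i) ^+ 2.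

From mathcomp Require Import all_boot all_order all_algebra.
From mathcomp Require Import ring.
Set Implicit Arguments. Unset Strict Implicit. Unset Printing Implicit Defensive.
Import Order.TTheory GRing.Theory Num.Theory.
Local Open Scope ring_scope.

(* The Gram-Schmidt vectors are computed in closed form by strong induction on
   k: given the closed forms of v*_j for j < k, the coefficients mu_(k,j) come
   out as y_k y_j / (x_j^2 K_(j+1)), and subtracting sum_j mu_(k,j) v*_j from
   v_k is a telescoping computation, since
   (y_j/x_j)^2 / (K_j K_(j+1)) = 1/K_j - 1/K_(j+1). *)

Lemma size_gs_seq (R : fieldType) n (v : nat -> 'cV[R]_n) k : size (gs_seq v k) = k.
Proof. by elim: k => //= k IH; rewrite size_rcons IH. Qed.

Lemma nth_gs_seq (R : fieldType) n (v : nat -> 'cV[R]_n) k j :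
  (j < k)%N -> nth 0 (gs_seq v k) j = gs v j.
Proof.
elim: k => // k IH; rewrite ltnS leq_eqVlt => /orP[/eqP-> //|lt_jk].
by rewrite /= nth_rcons size_gs_seq lt_jk IH.
Qed.

Lemma gsE (R : fieldType) n (v : nat -> 'cV[R]_n) k :
  gs v k = v k - \sum_(j < k) gs_mu v k j *: gs v j.
Proof.
rewrite /gs /= nth_rcons size_gs_seq ltnn eqxx.
by congr (_ - _); apply: eq_bigr => j _; rewrite nth_gs_seq.
Qed.

Lemma dot_nat (R : pzRingType) n (u w : 'cV[R]_n) (f g : nat -> R) :
  (forall i : 'I_n, u i 0 = f i) -> (forall i : 'I_n, w i 0 = g i) ->
  dot u w = \sum_(0 <= i < n) f i * g i.
Proof. by move=> uE wE; rewrite /dot big_mkord; apply: eq_bigr => i _; rewrite uE wE. Qed.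

Lemma Bmat_unit_x_neq0 (R : fieldType) d (x y : nat -> R) i :
  Bmat d x y \in unitmx -> (i < d)%N -> x i != 0.
Proof.
move=> Bunit lt_id; apply: contraTneq Bunit => x0.
rewrite unitmxE (expand_det_row _ (inord i)) big1 ?unitr0 // => j _.
have inordE : nat_of_ord (@inord d i) = i by rewrite inordK // ltnW.
rewrite !mxE -[inord i == j]/(nat_of_ord (@inord d i) == j) inordE (ltn_eqF lt_id).
by case: ifP => _; [case: eqP => [<-|_]; rewrite ?x0|]; rewrite mul0r.
Qed.

Section Kc.
Variables (R : fieldType) (x y : nat -> R).
Local Notation K := (Kc x y).

Lemma Kc0 : K 0 = 1.
Proof. by rewrite /Kc big_ord0 addr0. Qed.

Lemma KcS j : K j.+1 = K j + (y j / x j) ^+ 2.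
Proof. by rewrite /Kc big_ord_recr /= addrA. Qed.

Lemma sum_sqr_ratio j : \sum_(0 <= i < j) (y i / x i) ^+ 2 = K j - 1.
Proof. by rewrite /Kc big_mkord [1 + _]addrC addrK. Qed.

End Kc.

Section KcPos.
Variables (R : realFieldType) (x y : nat -> R).
Local Notation K := (Kc x y).

Lemma Kc_gt0 j : 0 < K j.
Proof.
apply: (lt_le_trans ltr01); rewrite lerDl.
by apply: sumr_ge0 => i _; exact: sqr_ge0.
Qed.

Lemma Kc_neq0 j : K j != 0.
Proof. by rewrite gt_eqF ?Kc_gt0. Qed.

Lemma sum_sqr_ratio_div_Kc m n : (m <= n)%N ->
  \sum_(m <= j < n) (y j / x j) ^+ 2 / (K j * K j.+1) = (K m)^-1 - (K n)^-1.
Proof.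
move=> le_mn; rewrite (telescope_sumr_eq (fun j => - (K j)^-1)) 1?addrC ?opprK // => j _.
have := Kc_neq0 j.+1; rewrite !KcS.
move: (K j) (y j / x j) (Kc_neq0 j) => c a c0 ca0.
by field; rewrite c0 ca0.
Qed.

Lemma sqr_add_div_Kc j : x j != 0 -> x j ^+ 2 + y j ^+ 2 / K j = x j ^+ 2 * K j.+1 / K j.
Proof. by move=> xj0; rewrite KcS; field; rewrite Kc_neq0. Qed.

End KcPos.

Section GramSchmidtBmat.
Variables (R : realFieldType) (d : nat) (x y : nat -> R).
Hypothesis x_neq0 : forall i, (i < d)%N -> x i != 0.
Local Notation K := (Kc x y).
Local Notation v := (Bcol d x y).

Definition bcol_entry (k i : nat) : R :=
  if (k < d)%N then (if i == k then x k else if i == d then y k else 0)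
  else (if i == d then y d else 0).

Definition gs_entry (k i : nat) : R :=
  if (i < k)%N then - (y k / K k) * (y i / x i)
  else if i == k then (if (k < d)%N then x k else y k / K k)
  else if (i < d)%N then 0 else y k / K k.

Definition gs_vec (k : nat) : 'cV[R]_d.+1 := \col_i gs_entry k i.

Definition gs_coef (k j : nat) : R := y k * y j / (x j ^+ 2 * K j.+1).

Lemma BcolE k (i : 'I_d.+1) : (k <= d)%N -> v k i 0 = bcol_entry k i.
Proof.
move=> le_kd; rewrite /Bcol !mxE.
by rewrite /bcol_entry -[i == inord k]/(nat_of_ord i == inord k) inordK.
Qed.

Lemma bcol_entry_eq0 k i : (i < d)%N -> i != k -> bcol_entry k i = 0.
Proof. by move=> lt_id ne_ik; rewrite /bcol_entry (negbTE ne_ik) ltn_eqF //; case: ifP. Qed.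

Lemma bcol_entry_diag k : (k < d)%N -> bcol_entry k k = x k.
Proof. by move=> lt_kd; rewrite /bcol_entry lt_kd eqxx. Qed.

Lemma bcol_entry_last k : (k <= d)%N -> bcol_entry k d = y k.
Proof.
rewrite /bcol_entry eqxx leq_eqVlt => /orP[/eqP->|lt_kd]; first by rewrite ltnn.
by rewrite lt_kd gtn_eqF.
Qed.

Lemma gs_entry_lt k i : (i < k)%N -> gs_entry k i = - (y k / K k) * (y i / x i).
Proof. by rewrite /gs_entry => ->. Qed.

Lemma gs_entry_diag k : (k < d)%N -> gs_entry k k = x k.
Proof. by rewrite /gs_entry ltnn eqxx => ->. Qed.

Lemma gs_entry_gt k i : (k < i)%N -> (i < d)%N -> gs_entry k i = 0.
Proof. by move=> lt_ki lt_id; rewrite /gs_entry ltnNge (ltnW lt_ki) gtn_eqF // lt_id. Qed.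

Lemma gs_entry_last k : (k <= d)%N -> gs_entry k d = y k / K k.
Proof.
rewrite /gs_entry leq_eqVlt => /orP[/eqP->|lt_kd]; first by rewrite ltnn eqxx.
by rewrite ltnNge (ltnW lt_kd) gtn_eqF // ltnn.
Qed.

Lemma dot_gs_vec j : (j <= d)%N ->
  dot (gs_vec j) (gs_vec j) = (if (j < d)%N then x j ^+ 2 else 0) + y j ^+ 2 / K j.
Proof.
move=> le_jd; rewrite (@dot_nat _ _ _ _ (gs_entry j) (gs_entry j)) => [|i|i]; last 2 first.
- by rewrite mxE.
- by rewrite mxE.
rewrite big_nat_recr //= (big_cat_nat (leq0n j) le_jd) /= gs_entry_last //.
have -> : \sum_(0 <= i < j) gs_entry j i * gs_entry j i = (y j / K j) ^+ 2 * (K j - 1).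
  rewrite -sum_sqr_ratio mulr_sumr; apply: eq_big_nat => i /andP[_ lt_ij].
  by rewrite gs_entry_lt //; ring.
have K0 := Kc_neq0 x y j.
case: (ltnP j d) => [lt_jd|ge_jd]; last by rewrite big_geq //; field.
rewrite big_ltn // gs_entry_diag // big_nat_cond big1 => [|i /andP[/andP[lt_ji lt_id] _]].
  by field.
by rewrite gs_entry_gt // mulr0.
Qed.

Lemma dot_Bcol_gs_vec j k : (j < k)%N -> (k <= d)%N ->
  dot (v k) (gs_vec j) = y k * (y j / K j).
Proof.
move=> lt_jk le_kd.
rewrite (@dot_nat _ _ _ _ (bcol_entry k) (gs_entry j)) => [|i|i]; last 2 first.
- exact: BcolE.
- by rewrite mxE.
rewrite big_nat_recr //= big_nat_cond big1 ?add0r => [|i /andP[/andP[_ lt_id] _]].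
  by rewrite bcol_entry_last // gs_entry_last // ltnW // (leq_trans lt_jk).
case: (leqP i j) => [le_ij|lt_ji]; last by rewrite gs_entry_gt ?mulr0.
by rewrite bcol_entry_eq0 ?mul0r // ltn_eqF // (leq_ltn_trans le_ij).
Qed.

Lemma gs_vec_mu j k : (j < k)%N -> (k <= d)%N ->
  dot (v k) (gs_vec j) / dot (gs_vec j) (gs_vec j) = gs_coef k j.
Proof.
move=> lt_jk le_kd; have lt_jd : (j < d)%N by apply: leq_trans le_kd.
rewrite dot_Bcol_gs_vec // (dot_gs_vec (ltnW lt_jd)) lt_jd sqr_add_div_Kc ?x_neq0 //.
rewrite /gs_coef; field.
by rewrite x_neq0 // !Kc_neq0.
Qed.

Lemma sum_gs_coef_last k m n : (m <= n)%N ->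
  \sum_(m <= j < n) gs_coef k j * (y j / K j) = y k * ((K m)^-1 - (K n)^-1).
Proof.
move=> le_mn; rewrite -sum_sqr_ratio_div_Kc // mulr_sumr.
by apply: eq_bigr => j _; rewrite /gs_coef expr_div_n !invfM; ring.
Qed.

Lemma gs_entry_rec_last k : (k <= d)%N ->
  bcol_entry k d - \sum_(0 <= j < k) gs_coef k j * gs_entry j d = gs_entry k d.
Proof.
move=> le_kd; rewrite bcol_entry_last // gs_entry_last //.
under eq_big_nat => j /andP[_ lt_jk] do rewrite gs_entry_last ?(ltnW (leq_trans lt_jk le_kd)) //.
by rewrite sum_gs_coef_last // Kc0 invr1; field; rewrite Kc_neq0.
Qed.

Lemma gs_entry_rec_lt k n : (k <= d)%N -> (n < d)%N ->
  bcol_entry k n - \sum_(0 <= j < k) gs_coef k j * gs_entry j n = gs_entry k n.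
Proof.
move=> le_kd lt_nd.
have vanish (c : nat -> R) m : (m <= n)%N -> \sum_(0 <= j < m) c j * gs_entry j n = 0.
  move=> le_mn; rewrite big_nat_cond big1 // => j /andP[/andP[_ lt_jm] _].
  by rewrite gs_entry_gt ?mulr0 // (leq_trans lt_jm).
case: (ltngtP n k) => [lt_nk|lt_kn|<-]; last first.
- by rewrite bcol_entry_diag ?gs_entry_diag ?vanish ?subr0.
- by rewrite bcol_entry_eq0 ?gtn_eqF ?gs_entry_gt ?vanish ?subr0 // ltnW.
rewrite bcol_entry_eq0 ?ltn_eqF // (big_cat_nat (leq0n n) (ltnW lt_nk)) /=.
rewrite vanish // add0r big_ltn // gs_entry_diag //.
under eq_big_nat => j /andP[lt_nj _] do
  rewrite gs_entry_lt // mulNr mulrN mulrA mulrC -mulNr.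
rewrite -mulr_sumr sum_gs_coef_last // gs_entry_lt // /gs_coef.
by field; rewrite x_neq0 // !Kc_neq0.
Qed.

Lemma gs_Bcol k : (k <= d)%N -> gs v k = gs_vec k.
Proof.
elim/ltn_ind: k => k IH le_kd; apply/matrixP => i j; rewrite (ord1 j) {j}.
rewrite [RHS]mxE gsE mxE BcolE // mxE summxE.
under eq_bigr => j _.
  have lt_jk := ltn_ord j; have le_jd := ltnW (leq_trans lt_jk le_kd).
  rewrite /gs_mu IH // gs_vec_mu // !mxE.
  over.
rewrite -(big_mkord xpredT (fun j => gs_coef k j * gs_entry j i)).
have [lt_id|ge_id] := ltnP i d; first exact: gs_entry_rec_lt.
have -> : nat_of_ord i = d by apply/eqP; rewrite eqn_leq -ltnS ltn_ord.
exact: gs_entry_rec_last.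
Qed.

End GramSchmidtBmat.

Theorem lemma4 (R : realFieldType) (d : nat) (x y : nat -> R)
  (hd : (0 < d)%N) (hB : Bmat d x y \in unitmx) :
  let v := Bcol d x y in
  let K := Kc x y in
  (forall (k : nat) (i : 'I_d.+1), (k < d)%N ->
     gs v k i 0 =
       (if (i < k)%N then - (y k / K k) * (y i / x i)
        else if i == k :> nat then x k
        else if (i < d)%N then 0
        else y k / K k))
  /\ (forall i : 'I_d.+1,
       gs v d i 0 = (if (i < d)%N then - (y d / K d) * (y i / x i)
                     else y d / K d))
  /\ (forall k : nat, (k < d)%N ->
       dot (gs v k) (gs v k) = x k ^+ 2 * K k.+1 / K k)
  /\ dot (gs v d) (gs v d) = y d ^+ 2 / K d
  /\ (forall j k : nat, (j < k)%N -> (k <= d)%N ->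
       gs_mu v k j = y k * y j / (x j ^+ 2 * K j.+1)).
Proof.
move=> v K; rewrite {}/v {}/K.
have x_neq0 i : (i < d)%N -> x i != 0 := Bmat_unit_x_neq0 hB.
have gsB := gs_Bcol y x_neq0.
split; [|split; [|split; [|split]]].
- by move=> k i lt_kd; rewrite gsB ?(ltnW lt_kd) // mxE /gs_entry lt_kd.
- move=> i; rewrite gsB // mxE /gs_entry ltnn.
  by case: ifP => // ->; case: eqP.
- move=> k lt_kd; rewrite gsB ?(ltnW lt_kd) // dot_gs_vec ?(ltnW lt_kd) // lt_kd.
  by rewrite sqr_add_div_Kc ?x_neq0.
- by rewrite gsB // dot_gs_vec // ltnn add0r.
- move=> j k lt_jk le_kd.
  by rewrite /gs_mu gsB ?(ltnW (leq_trans lt_jk le_kd)) // gs_vec_mu.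
Qed.
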